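(* For integers $\alpha\geq 3$, $\beta\geq 9$, $\rho\geq 4$, let $k_\alpha=2^{2\alpha}+2^\alpha+2$, $K_\beta=2^{2\beta+1}+3\cdot 2^{\beta+3}+49$, $\kappa_\rho=2^\rho+2$, and let $\chi(\rho)=1$ if $\rho$ is even and $\chi(\rho)=2$ if $\rho$ is odd. Then $\Gamma(k_\alpha)\geq 3\cdot 2^{2\alpha}-2^\alpha+1$, $\Gamma(K_\beta)\geq 3\cdot 2^{2\beta+1}-2^{\beta-1}+1$, and $\Gamma(\kappa_\rho)\geq 5\cdot 2^{\rho-1}-8\chi(\rho)+1$.
   Context: The Thue–Morse word is $\mathbf t=\mathbf t_1\mathbf t_2\cdots$ where $\mathbf t_i\in\{0,1\}$ has the parity of the number of $1$'s in the binary expansion of $i-1$. For positive integers $\alpha\le\beta$, $\langle\alpha,\beta\rangle=\mathbf t_\alpha\cdots\mathbf t_\beta$. A $k$-anti-power is a word $w_1\cdots w_k$ with $w_1,\dots,w_k$ pairwise distinct words of equal length. $\mathcal F(k)$ is the set of odd positive integers $m$ such that $\langle 1,km\rangle$ is a $k$-anti-power. $\Gamma(k)=\sup\big((2\mathbb Z^+-1)\setminus\mathcal F(k)\big)$. *)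

From mathcomp Require Import all_boot.
Set Implicit Arguments. Unset Strict Implicit. Unset Printing Implicit Defensive.

(* number of 1's in the binary expansion of n (fuel = n suffices) *)
Fixpoint popcount_aux (fuel n : nat) : nat :=
  match fuel with
  | 0 => 0
  | f.+1 => odd n + popcount_aux f n./2
  end.
Definition popcount (n : nat) : nat := popcount_aux n n.

(* Thue-Morse word, 1-indexed: t_i = parity of popcount (i-1) *)
Definition tm (i : nat) : bool := odd (popcount i.-1).

Definition tm_factor (a b : nat) : seq bool := mkseq (fun j => tm (a + j)) (b.+1 - a).

Definition anti_power (k : nat) (w : seq bool) : Prop :=
  exists ws : seq (seq bool),
    [/\ size ws = k, constant (map size ws), uniq ws & flatten ws = w].

Definition inF (k m : nat) : Prop :=
  odd m /\ 0 < m /\ anti_power k (tm_factor 1 (k * m)).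

(* Gamma(k) >= N, with Gamma(k) = sup of the odd positive integers not in F(k) *)
Definition Gamma_ge (k N : nat) : Prop :=
  exists m, [/\ odd m, 0 < m, N <= m & ~ inF k m].

Definition chi (r : nat) : nat := if odd r then 2 else 1.

From mathcomp Require Import all_boot zify.

(* Each bound is witnessed by the odd number m equal to the bound itself.
   Two blocks of <1, k m>, with indices i and i + 2^n, then coincide: passing
   from the first to the second adds m 2^n to every position y, i.e. adds m to
   the quotient y / 2^n and keeps the remainder.  As t is the parity of the
   binary digit sum, which is additive over disjoint ranges of binary digits,
   this preserves t as soon as t(q + m) = t(q) for the (at most three)
   quotients q met by the first block; for the chosen parameters these reduce
   to digit sums of a few small numbers. *)

Lemma popcount_aux0 f : popcount_aux f 0 = 0.
Proof. by elim: f. Qed.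

Lemma popcount_aux_fuel f g n :
  n <= f -> n <= g -> popcount_aux f n = popcount_aux g n.
Proof.
elim: f g n => [|f IHf] [|g] n le_nf le_ng //=.
- have -> : n = 0 by lia.
  by rewrite popcount_aux0.
- have -> : n = 0 by lia.
  by rewrite popcount_aux0.
- by rewrite (IHf g) //; lia.
Qed.

Lemma popcount_rec n : popcount n = odd n + popcount n./2.
Proof.
case: n => [|n] //; rewrite /popcount /=.
by congr (_ + _); apply: popcount_aux_fuel; lia.
Qed.

Lemma popcount_bit_double (b : bool) n : popcount (b + n.*2) = b + popcount n.
Proof.
rewrite popcount_rec oddD odd_double addbF.
by case: b; rewrite /= ?add0n ?add1n ?doubleK // uphalf_double.
Qed.

Lemma popcount_add_mul_exp2 n x s :
  s < 2 ^ n -> popcount (x * 2 ^ n + s) = popcount x + popcount s.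
Proof.
elim: n s => [|n IHn] s lt_s.
  have -> : s = 0 by lia.
  by rewrite expn0 muln1 !addn0.
have -> : x * 2 ^ n.+1 + s = odd s + (x * 2 ^ n + s./2).*2.
  by rewrite expnS; have := odd_double_half s; lia.
rewrite popcount_bit_double IHn; last by rewrite expnS in lt_s; lia.
by rewrite [popcount s]popcount_rec addnCA.
Qed.

Lemma popcount_exp2_sub1 n : popcount (2 ^ n - 1) = n.
Proof.
elim: n => [|n IHn] //.
have -> : 2 ^ n.+1 - 1 = true + (2 ^ n - 1).*2 by have := expn_gt0 2 n; rewrite expnS; lia.
by rewrite popcount_bit_double IHn.
Qed.

(* 0-indexed: [tm n.+1 = thue_morse n]. *)
Definition thue_morse (n : nat) : bool := odd (popcount n).

Lemma thue_morse_add_mul_exp2 n x s :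
  s < 2 ^ n -> thue_morse (x * 2 ^ n + s) = thue_morse x (+) thue_morse s.
Proof. by move=> lt_s; rewrite /thue_morse popcount_add_mul_exp2 // oddD. Qed.

Lemma thue_morse_shift n m y :
  thue_morse (y %/ 2 ^ n + m) = thue_morse (y %/ 2 ^ n) ->
  thue_morse (y + m * 2 ^ n) = thue_morse y.
Proof.
have lt_r : y %% 2 ^ n < 2 ^ n by rewrite ltn_mod expn_gt0.
have -> : y + m * 2 ^ n = (y %/ 2 ^ n + m) * 2 ^ n + y %% 2 ^ n.
  by rewrite {1}(divn_eq y (2 ^ n)); lia.
by move=> eq_q; rewrite thue_morse_add_mul_exp2 // eq_q -(thue_morse_add_mul_exp2 n) // -divn_eq.
Qed.

Lemma anti_power_chunks_neq k m w i j :
  anti_power k w -> size w = k * m -> i < j < k ->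
  take m (drop (i * m) w) != take m (drop (j * m) w).
Proof.
case=> ws [size_ws const_ws uniq_ws <-] size_w /andP[lt_ij lt_jk].
have [L shape_ws] : exists L, shape ws = nseq k L.
  by case/(constantP 0): const_ws => L eqL; exists L; rewrite /shape eqL size_map size_ws.
have eq_Lm : L = m.
  apply/eqP; rewrite -(eqn_pmul2l (_ : 0 < k)); last lia.
  by rewrite -size_w size_flatten shape_ws sumn_nseq mulnC.
have chunkE l : l < k -> nth [::] ws l = take m (drop (l * m) (flatten ws)).
  move=> lt_lk; rewrite -{1}(flattenK ws) nth_reshape shape_ws take_nseq; last lia.
  by rewrite sumn_nseq nth_nseq lt_lk eq_Lm mulnC.
by rewrite -!chunkE ?nth_uniq ?size_ws //; lia.
Qed.

Lemma tm_factor_chunk k m i : i < k ->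
  take m (drop (i * m) (tm_factor 1 (k * m))) = mkseq (fun x => thue_morse (i * m + x)) m.
Proof.
move=> lt_ik; have le_chunk : i * m + m <= k * m by rewrite -mulSnr leq_mul2r lt_ik orbT.
rewrite /tm_factor /mkseq subn1 -map_drop -map_take drop_iota take_iota.
rewrite (_ : minn _ _ = m); last lia.
by rewrite -[0 + i * m]addn0 iotaDl -map_comp.
Qed.

Lemma not_anti_power_of_equal_chunks k m i j : i < j < k ->
  (forall x, x < m -> thue_morse (i * m + x) = thue_morse (j * m + x)) ->
  ~ anti_power k (tm_factor 1 (k * m)).
Proof.
move=> lt_ijk eq_chunks anti.
have lt_ik : i < k by case/andP: lt_ijk; apply: ltn_trans.
have size_w : size (tm_factor 1 (k * m)) = k * m by rewrite size_mkseq; lia.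
have /negP[] := anti_power_chunks_neq k m _ i j anti size_w lt_ijk.
rewrite !tm_factor_chunk //; last by case/andP: lt_ijk.
apply/eqP/(eq_from_nth (x0 := false)) => [|x]; rewrite !size_mkseq // => lt_xm.
by rewrite !nth_mkseq ?eq_chunks.
Qed.

Lemma thue_morse_chunks_eq_of_window n m i q0 w :
  q0 * 2 ^ n <= i * m -> i * m + m <= (q0 + w) * 2 ^ n ->
  (forall d, d < w -> thue_morse (q0 + d + m) = thue_morse (q0 + d)) ->
  forall x, x < m -> thue_morse (i * m + x) = thue_morse ((i + 2 ^ n) * m + x).
Proof.
move=> le_lo le_hi periodic x lt_xm.
have pos2n : 0 < 2 ^ n by rewrite expn_gt0.
have -> : (i + 2 ^ n) * m + x = (i * m + x) + m * 2 ^ n by rewrite mulnDl; lia.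
symmetry; apply: thue_morse_shift.
have ge_q : q0 <= (i * m + x) %/ 2 ^ n by rewrite leq_divRL //; lia.
have lt_q : (i * m + x) %/ 2 ^ n < q0 + w by rewrite ltn_divLR //; lia.
have -> : (i * m + x) %/ 2 ^ n = q0 + ((i * m + x) %/ 2 ^ n - q0) by lia.
by apply: periodic; lia.
Qed.

Lemma Gamma_ge_of_window k m n i q0 w :
  odd m -> i + 2 ^ n < k ->
  q0 * 2 ^ n <= i * m -> i * m + m <= (q0 + w) * 2 ^ n ->
  (forall d, d < w -> thue_morse (q0 + d + m) = thue_morse (q0 + d)) ->
  Gamma_ge k m.
Proof.
move=> odd_m lt_k le_lo le_hi periodic; exists m; split => //; first exact: odd_gt0.
case=> _ [_]; apply: (not_anti_power_of_equal_chunks k m i (i + 2 ^ n)).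
  by rewrite lt_k andbT -addn1 leq_add2l expn_gt0.
exact: (thue_morse_chunks_eq_of_window n m i q0 w).
Qed.

Lemma Gamma_ge_k_alpha a : 3 <= a ->
  Gamma_ge (2 ^ (2 * a) + 2 ^ a + 2) (3 * 2 ^ (2 * a) - 2 ^ a + 1).
Proof.
move=> ge3_a.
have sq : 2 ^ (2 * a) = 2 ^ a * 2 ^ a by rewrite mul2n -addnn expnD.
have ge8 : 8 <= 2 ^ a by rewrite (_ : 8 = 2 ^ 3) // leq_exp2l.
have even_X : odd (2 ^ a) = false by rewrite oddX orbF; apply/eqP; lia.
apply: (Gamma_ge_of_window _ _ (2 * a) (2 ^ a + 1) (3 * 2 ^ a + 2) 3); rewrite sq.
- by rewrite oddD oddB ?oddM ?even_X //; nia.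
- lia.
- nia.
- nia.
move=> d lt_d3.
have -> : 3 * 2 ^ a + 2 + d + (3 * (2 ^ a * 2 ^ a) - 2 ^ a + 1) =
          (3 * 2 ^ a + 2) * 2 ^ a + (3 + d) by nia.
rewrite -addnA !thue_morse_add_mul_exp2; try lia.
by case: d lt_d3 => [|[|[|]]].
Qed.

Lemma Gamma_ge_K_beta b : 9 <= b ->
  Gamma_ge (2 ^ (2 * b + 1) + 3 * 2 ^ (b + 3) + 49) (3 * 2 ^ (2 * b + 1) - 2 ^ (b - 1) + 1).
Proof.
move=> ge9_b.
have sq : 2 ^ (2 * b + 1) = 8 * (2 ^ (b - 1) * 2 ^ (b - 1)).
  by rewrite -!expnD (_ : 8 = 2 ^ 3) // -expnD; congr (2 ^ _); lia.
have lin : 2 ^ (b + 3) = 16 * 2 ^ (b - 1).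
  by rewrite (_ : 16 = 2 ^ 4) // -expnD; congr (2 ^ _); lia.
have ge256 : 256 <= 2 ^ (b - 1) by rewrite (_ : 256 = 2 ^ 8) // leq_exp2l //; lia.
have even_X : odd (2 ^ (b - 1)) = false by rewrite oddX orbF; apply/eqP; lia.
apply: (Gamma_ge_of_window _ _ (2 * b + 1) (48 * 2 ^ (b - 1) + 48)
                           (144 * 2 ^ (b - 1) + 138) 3); rewrite sq ?lin.
- by rewrite oddD oddB ?oddM ?even_X //; nia.
- lia.
- nia.
- nia.
move=> d lt_d3.
have -> : 144 * 2 ^ (b - 1) + 138 + d + (3 * (8 * (2 ^ (b - 1) * 2 ^ (b - 1))) - 2 ^ (b - 1) + 1)
          = (24 * 2 ^ (b - 1) + 143) * 2 ^ (b - 1) + (139 + d) by nia.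
rewrite -addnA !thue_morse_add_mul_exp2; try lia.
by case: d lt_d3 => [|[|[|]]].
Qed.

Lemma Gamma_ge_kappa_rho r : 4 <= r ->
  Gamma_ge (2 ^ r + 2) (5 * 2 ^ (r - 1) - 8 * chi r + 1).
Proof.
move=> ge4_r.
have chiE : 8 * chi r = 2 ^ (3 + odd r) by rewrite /chi; case: (odd r).
have ge8 : 8 <= 2 ^ (3 + odd r) <= 16 by case: (odd r).
have even_E : odd (2 ^ (3 + odd r)) = false by case: (odd r).
have [t rE] : exists t, r = (2 * t + (3 + odd r)).+1.
  by exists (r./2 - 2); have := odd_double_half r; lia.
set e := 3 + odd r in chiE ge8 even_E rE.
have halfE : 2 ^ (r - 1) = 2 ^ (2 * t) * 2 ^ e by rewrite rE subn1 expnD.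
have fullE : 2 ^ r = 2 * 2 ^ (r - 1) by rewrite rE expnS subn1.
have pos_X : 0 < 2 ^ (2 * t) by rewrite expn_gt0.
apply: (Gamma_ge_of_window _ _ r 1 2 3); rewrite ?chiE ?fullE ?halfE.
- by rewrite oddD oddB ?oddM ?even_E ?andbF //; nia.
- lia.
- nia.
- nia.
move=> d lt_d3.
have -> : 2 + d + (5 * (2 ^ (2 * t) * 2 ^ e) - 2 ^ e + 1)
          = (4 * 2 ^ (2 * t) + (2 ^ (2 * t) - 1)) * 2 ^ e + (3 + d) by nia.
rewrite !thue_morse_add_mul_exp2; try lia.
rewrite [thue_morse (2 ^ _ - 1)]/thue_morse popcount_exp2_sub1 oddM.
by case: d lt_d3 => [|[|[|]]].
Qed.

Theorem lemma2 (a b r : nat) :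
  3 <= a -> 9 <= b -> 4 <= r ->
  [/\ Gamma_ge (2 ^ (2 * a) + 2 ^ a + 2) (3 * 2 ^ (2 * a) - 2 ^ a + 1),
      Gamma_ge (2 ^ (2 * b + 1) + 3 * 2 ^ (b + 3) + 49)
               (3 * 2 ^ (2 * b + 1) - 2 ^ (b - 1) + 1)
    & Gamma_ge (2 ^ r + 2) (5 * 2 ^ (r - 1) - 8 * chi r + 1)].
Proof.
move=> ge3_a ge9_b ge4_r.
by split; [exact: Gamma_ge_k_alpha | exact: Gamma_ge_K_beta | exact: Gamma_ge_kappa_rho].
Qed.
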